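(* Let $h \geq 1$, $N \geq 1$, and let $d_1 \geq \dots \geq d_N$ and $d_1' \geq \dots \geq d_N'$ be integers in $[0,h]$. Then $P(d_1, \dots, d_N)(x) \geq P(d_1', \dots, d_N')(x)$ for all real $0 \leq x \leq h$ if and only if $d_1' + \dots + d_i' \leq d_1 + \dots + d_i$ for all $1 \leq i \leq N$.
   Context: For integers $d_1, \dots, d_N$ between $0$ and $h$, $P(d_1,\dots,d_N)$ is the function on $[0,h]$ given by $P(d_1, \dots, d_N)(x) = \frac{1}{N} \sum_{i=1}^N \max(0, x + d_i - h)$. *)

From Stdlib Require Import Reals Lra Lia.
Open Scope R_scope.

Fixpoint sum1 (n : nat) (f : nat -> R) : R :=
  match n with
  | O => 0
  | S m => sum1 m f + f (S m)
  end.

Fixpoint nsum1 (n : nat) (f : nat -> nat) : nat :=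
  match n with
  | O => O
  | S m => (nsum1 m f + f (S m))%nat
  end.

(* P(d_1,...,d_N)(x) = (1/N) * sum_{i=1}^N max(0, x + d_i - h);
   the sequence is given as d : nat -> nat, using the values d 1, ..., d N. *)
Definition P (h N : nat) (d : nat -> nat) (x : R) : R :=
  / INR N * sum1 N (fun i => Rmax 0 (x + INR (d i) - INR h)).

(* Writing c := h - x, N * P(d)(x) is the excess E_d(c) = sum_j max(0, d_j - c) of the
   d_j over the level c.  Every prefix sum d_1 + ... + d_k - k c is a lower bound for
   E_d(c), and for nonincreasing d the bound is attained at the k separating the d_j
   above c from those below it; at c = d_i one may take k = i.  So E_d dominates
   E_d' iff the prefix sums of d dominate those of d'. *)
From Stdlib Require Import Reals Lra Lia.
Open Scope R_scope.

Lemma sum1_ext n f g :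
  (forall j, (1 <= j <= n)%nat -> f j = g j) -> sum1 n f = sum1 n g.
Proof.
  induction n as [|n IH]; intros Hfg; simpl; [reflexivity|].
  rewrite IH by (intros; apply Hfg; lia).
  rewrite Hfg by lia. reflexivity.
Qed.

Lemma sum1_le n f g :
  (forall j, (1 <= j <= n)%nat -> f j <= g j) -> sum1 n f <= sum1 n g.
Proof.
  induction n as [|n IH]; intros Hfg; simpl; [lra|].
  assert (sum1 n f <= sum1 n g) by (apply IH; intros; apply Hfg; lia).
  assert (f (S n) <= g (S n)) by (apply Hfg; lia).
  lra.
Qed.

Lemma sum1_le_nonneg k n f :
  (k <= n)%nat -> (forall j, 0 <= f j) -> sum1 k f <= sum1 n f.
Proof.
  intros Hkn Hf. induction Hkn as [|n _ IH]; simpl; [lra|].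
  specialize (Hf (S n)). lra.
Qed.

Lemma sum1_INR_sub k (d : nat -> nat) c :
  sum1 k (fun j => INR (d j) - c) = INR (nsum1 k d) - INR k * c.
Proof.
  induction k as [|k IH]; cbn [sum1 nsum1]; [simpl; ring|].
  rewrite IH, plus_INR, S_INR. ring.
Qed.

Definition nonincreasing_on (n : nat) (d : nat -> nat) : Prop :=
  forall i j, (1 <= i <= j)%nat -> (j <= n)%nat -> (d j <= d i)%nat.

Definition excess (n : nat) (d : nat -> nat) (c : R) : R :=
  sum1 n (fun j => Rmax 0 (INR (d j) - c)).

Lemma excess_ge_prefix k n d c :
  (k <= n)%nat -> INR (nsum1 k d) - INR k * c <= excess n d c.
Proof.
  intros Hkn. rewrite <- sum1_INR_sub. unfold excess.
  apply Rle_trans with (sum1 k (fun j => Rmax 0 (INR (d j) - c))).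
  - apply sum1_le. intros; apply Rmax_r.
  - apply sum1_le_nonneg; [exact Hkn|]. intros; apply Rmax_l.
Qed.

Lemma excess_eq_prefix k n d c :
  (k <= n)%nat ->
  (forall j, (1 <= j <= k)%nat -> c <= INR (d j)) ->
  (forall j, (k < j <= n)%nat -> INR (d j) <= c) ->
  excess n d c = INR (nsum1 k d) - INR k * c.
Proof.
  intros Hkn Habove. unfold excess.
  induction Hkn as [|n Hkn IH]; intros Hbelow.
  - rewrite <- sum1_INR_sub. apply sum1_ext.
    intros j Hj. apply Rmax_right. specialize (Habove j Hj). lra.
  - simpl. rewrite IH by (intros; apply Hbelow; lia).
    assert (INR (d (S n)) <= c) by (apply Hbelow; lia).
    rewrite Rmax_left by lra. ring.
Qed.

Lemma exists_level_split n d c :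
  nonincreasing_on n d ->
  exists k, (k <= n)%nat /\
    (forall j, (1 <= j <= k)%nat -> c <= INR (d j)) /\
    (forall j, (k < j <= n)%nat -> INR (d j) <= c).
Proof.
  induction n as [|n IH]; intros Hd.
  - exists 0%nat. split; [lia | split; intros; lia].
  - destruct IH as [k [Hkn [Habove Hbelow]]].
    { intros i j Hij Hjn. apply Hd; lia. }
    destruct (Nat.eq_dec k n) as [->|Hkn'].
    + destruct (Rle_lt_dec c (INR (d (S n)))) as [Hc|Hc].
      * exists (S n). split; [lia | split; intros j Hj; [|lia]].
        destruct (Nat.eq_dec j (S n)) as [->|]; [exact Hc|apply Habove; lia].
      * exists n. split; [lia | split; [exact Habove|]].
        intros j Hj. replace j with (S n) by lia. lra.
    + exists k. split; [lia | split; [exact Habove|]].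
      intros j Hj. destruct (Nat.eq_dec j (S n)) as [->|]; [|apply Hbelow; lia].
      apply Rle_trans with (INR (d n)); [apply le_INR, Hd; lia | apply Hbelow; lia].
Qed.

Lemma excess_le_of_prefix_le n d d' c :
  nonincreasing_on n d' ->
  (forall i, (1 <= i <= n)%nat -> (nsum1 i d' <= nsum1 i d)%nat) ->
  excess n d' c <= excess n d c.
Proof.
  intros Hd' Hprefix.
  destruct (exists_level_split n d' c Hd') as [k [Hkn [Habove Hbelow]]].
  rewrite (excess_eq_prefix k n d' c Hkn Habove Hbelow).
  assert (INR (nsum1 k d') <= INR (nsum1 k d)).
  { apply le_INR. destruct k as [|k]; [simpl; lia | apply Hprefix; lia]. }
  pose proof (excess_ge_prefix k n d c Hkn). lra.
Qed.

Lemma prefix_le_of_excess_le n d d' i :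
  nonincreasing_on n d -> (1 <= i <= n)%nat ->
  excess n d' (INR (d i)) <= excess n d (INR (d i)) ->
  (nsum1 i d' <= nsum1 i d)%nat.
Proof.
  intros Hd Hi Hexcess. apply INR_le.
  rewrite (excess_eq_prefix i n d (INR (d i))) in Hexcess; [| lia
    | intros j Hj; apply le_INR, Hd; lia | intros j Hj; apply le_INR, Hd; lia].
  pose proof (excess_ge_prefix i n d' (INR (d i)) (proj2 Hi)). lra.
Qed.

Lemma P_excess h N d x : P h N d x = / INR N * excess N d (INR h - x).
Proof.
  unfold P, excess. f_equal. apply sum1_ext.
  intros j _. f_equal. ring.
Qed.

Lemma P_le_iff_excess_le h N d d' x : (1 <= N)%nat ->
  P h N d' x <= P h N d x <-> excess N d' (INR h - x) <= excess N d (INR h - x).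
Proof.
  intros HN. rewrite !P_excess.
  assert (0 < / INR N) by (apply Rinv_0_lt_compat, lt_0_INR; lia).
  split; intros Hle.
  - apply (Rmult_le_reg_l (/ INR N)); assumption.
  - apply Rmult_le_compat_l; lra.
Qed.

Theorem mainTheorem2 (h N : nat) (d d' : nat -> nat) :
  (1 <= h)%nat -> (1 <= N)%nat ->
  (forall i, (1 <= i <= N)%nat -> (d i <= h)%nat /\ (d' i <= h)%nat) ->
  (forall i j, (1 <= i <= j)%nat -> (j <= N)%nat -> (d j <= d i)%nat) ->
  (forall i j, (1 <= i <= j)%nat -> (j <= N)%nat -> (d' j <= d' i)%nat) ->
  ((forall x : R, 0 <= x <= INR h -> P h N d x >= P h N d' x) <->
   (forall i, (1 <= i <= N)%nat -> (nsum1 i d' <= nsum1 i d)%nat)).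
Proof.
  intros _ HN Hbound Hd Hd'. split.
  - intros HP i Hi. apply (prefix_le_of_excess_le N d d' i Hd Hi).
    assert (INR (d i) <= INR h) by (apply le_INR, Hbound, Hi).
    pose proof (pos_INR (d i)).
    specialize (HP (INR h - INR (d i)) ltac:(lra)).
    apply Rge_le, (P_le_iff_excess_le h N d d' _ HN) in HP.
    replace (INR h - (INR h - INR (d i))) with (INR (d i)) in HP by ring.
    exact HP.
  - intros Hprefix x _. apply Rle_ge, (P_le_iff_excess_le h N d d' x HN).
    exact (excess_le_of_prefix_le N d d' _ Hd' Hprefix).
Qed.
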